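(* Let $\Omega A$ and $\Omega B$ be differential graded algebras over $A$ and $B$. Let $E$ be a $(B,A)$-bimodule together with a $k$-linear map $\nabla^0:E\to\Omega^1B\otimes_BE$ satisfying $\nabla^0(be)=db\otimes_Be+b\nabla^0(e)$ for all $b\in B$, $e\in E$, and a $(B,A)$-bimodule map $\sigma:E\otimes_A\Omega^1A\to\Omega^1B\otimes_BE$, such that $\nabla^0(ea)=\nabla^0(e)a+\sigma(e\otimes_A da)$ for all $e\in E$, $a\in A$. For $e\in E$ let $\sigma_e:\Omega^1A\to\Omega^1B\otimes_BE$, $\omega\mapsto\sigma(e\otimes_A\omega)$. Let $M$ be a right $A$-module and $\nabla_0:\mathrm{Hom}_A(\Omega^1A,M)\to M$ a hom-connection. Regard $\mathrm{Hom}_A(E,M)$ as a right $B$-module by $(gb)(e)=g(be)$, and identify $\mathrm{Hom}_B(\Omega^1B,\mathrm{Hom}_A(E,M))\cong\mathrm{Hom}_A(\Omega^1B\otimes_BE,M)$ via $f\mapsto(\omega\otimes_Be\mapsto f(\omega)(e))$. Then the formula $$\nabla_0^E(f)(e):=\nabla_0(f\circ\sigma_e)-f(\nabla^0(e)),\qquad f\in \mathrm{Hom}_A(\Omega^1B\otimes_BE,M),\ e\in E,$$ defines a map $\nabla^E_0:\mathrm{Hom}_B(\Omega^1B,\mathrm{Hom}_A(E,M))\to\mathrm{Hom}_A(E,M)$ (i.e. each $\nabla_0^E(f)$ is right $A$-linear), and $(\mathrm{Hom}_A(E,M),\nabla^E_0)$ is a hom-connection with respect to $\Omega B$.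
   Context: All algebras are associative and unital over a field $k$. A differential graded algebra $\Omega A=\bigoplus_{n\ge0}\Omega^nA$ over $A=\Omega^0A$ has a degree-one differential $d$ with $d^2=0$ satisfying the graded Leibniz rule; similarly for $\Omega B$. For a right $A$-module $M$, $\mathrm{Hom}_A(-,-)$ denotes right $A$-linear maps, and $\mathrm{Hom}_A(\Omega^1A,M)$ is a right $A$-module via $(fa)(\omega)=f(a\omega)$. A (right) hom-connection on $M$ with respect to $\Omega A$ is a $k$-linear map $\nabla_0:\mathrm{Hom}_A(\Omega^1A,M)\to M$ with $\nabla_0(fa)=\nabla_0(f)a+f(da)$ for all $f$ and $a\in A$ (analogously with respect to $\Omega B$ for right $B$-modules). *)

(* Modules/bimodules are encoded as zmodTypes equipped with
   explicit action maps; k-linear structure is induced through the k-algebras. *)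
From HB Require Import structures.
From mathcomp Require Import all_boot all_order all_algebra.
Set Implicit Arguments. Unset Strict Implicit. Unset Printing Implicit Defensive.
Import GRing.Theory.
Local Open Scope ring_scope.

Definition is_addmap (X Y : zmodType) (h : X -> Y) := forall u v, h (u + v) = h u + h v.

Definition lmod_act (R : pzRingType) (V : zmodType) (act : R -> V -> V) :=
  [/\ forall v, act 1 v = v,
      forall r s v, act (r * s) v = act r (act s v),
      forall r v w, act r (v + w) = act r v + act r w &
      forall r s v, act (r + s) v = act r v + act s v].

Definition rmod_act (R : pzRingType) (V : zmodType) (act : V -> R -> V) :=
  [/\ forall v, act v 1 = v,
      forall r s v, act v (r * s) = act (act v r) s,
      forall r v w, act (v + w) r = act v r + act w r &
      forall r s v, act v (r + s) = act v r + act v s].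

(* (B,A)-bimodule over the field k (k acts centrally, through c%:A) *)
Definition kbimod (k : fieldType) (B A : algType k) (V : zmodType)
  (l : B -> V -> V) (r : V -> A -> V) :=
  [/\ lmod_act l, rmod_act r,
      forall b v a, r (l b v) a = l b (r v a) &
      forall (c : k) v, l (c%:A) v = r v (c%:A)].

(* first-order part of a DGA over A: the A-bimodule Omega^1 A with the
   differential d : A -> Omega^1 A (k-linear, Leibniz rule) *)
Definition fodc (k : fieldType) (A : algType k) (Om : zmodType)
  (l : A -> Om -> Om) (r : Om -> A -> Om) (d : A -> Om) :=
  [/\ kbimod l r, is_addmap d,
      forall (c : k) a, d (c *: a) = l (c%:A) (d a) &
      forall a a', d (a * a') = r (d a) a' + l a (d a')].

(* X (x)_R Y realised as T with tensor map t : X -> Y -> T, characterised by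
   the universal property of balanced biadditive maps *)
Definition is_tensor (R : Type) (X Y T : zmodType)
  (rX : X -> R -> X) (lY : R -> Y -> Y) (t : X -> Y -> T) :=
  [/\ forall x1 x2 y, t (x1 + x2) y = t x1 y + t x2 y,
      forall x y1 y2, t x (y1 + y2) = t x y1 + t x y2,
      forall x r y, t (rX x r) y = t x (lY r y) &
      forall (Z : zmodType) (g : X -> Y -> Z),
        (forall x1 x2 y, g (x1 + x2) y = g x1 y + g x2 y) ->
        (forall x y1 y2, g x (y1 + y2) = g x y1 + g x y2) ->
        (forall x r y, g (rX x r) y = g x (lY r y)) ->
        exists h : T -> Z, [/\ is_addmap h, forall x y, h (t x y) = g x y &
          forall h' : T -> Z, is_addmap h' -> (forall x y, h' (t x y) = g x y) ->
            forall u, h' u = h u]].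

Definition homR (R : Type) (X Y : zmodType) (rX : X -> R -> X) (rY : Y -> R -> Y)
  (f : X -> Y) := is_addmap f /\ forall x r, f (rX x r) = rY (f x) r.

(* right hom-connection on (N, rN) w.r.t. the calculus (Om, lOm, rOm, d);
   nab is evaluated only on right R-linear f : Om -> N *)
Definition is_hom_connection (k : fieldType) (R : algType k) (Om N : zmodType)
  (lOm : R -> Om -> Om) (rOm : Om -> R -> Om) (d : R -> Om)
  (rN : N -> R -> N) (nab : (Om -> N) -> N) :=
  [/\ forall f g, homR rOm rN f -> homR rOm rN g ->
        nab (fun w => f w + g w) = nab f + nab g,
      forall (c : k) f, homR rOm rN f ->
        nab (fun w => rN (f w) (c%:A)) = rN (nab f) (c%:A) &
      forall f a, homR rOm rN f ->
        nab (fun w => f (lOm a w)) = rN (nab f) a + f (d a)].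

Definition nablaE (OA E S T M : zmodType) (nabla0 : (OA -> M) -> M)
  (sigma : S -> T) (tS : E -> OA -> S) (nab0 : E -> T) (F : T -> M) (e : E) : M :=
  nabla0 (fun w => F (sigma (tS e w))) - F (nab0 e).

(* Everything reduces to the axioms of the hom-connection [nabla0] applied to
   the pullbacks [w |-> F (sigma (e (x) w))], which are right A-linear because
   sigma is.  Right A-linearity of [nablaE F] is where the twisted Leibniz rule
   [nabla^0 (e a) = nabla^0 (e) a + sigma (e (x) da)] enters: the correction
   term [F (sigma (e (x) da))] it produces cancels the one produced by the
   Leibniz rule of [nabla0].  The Leibniz rule for [nablaE] is the left Leibniz
   rule of [nabla^0] combined with left B-linearity of sigma. *)
From Stdlib Require Import FunctionalExtensionality.
From HB Require Import structures.
From mathcomp Require Import all_boot all_order all_algebra.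
Set Implicit Arguments. Unset Strict Implicit. Unset Printing Implicit Defensive.
Import GRing.Theory.
Local Open Scope ring_scope.

Lemma addmap0 (X Y : zmodType) (h : X -> Y) : is_addmap h -> h 0 = 0.
Proof.
by move=> h_add; apply: (addrI (h 0)); rewrite -h_add !addr0.
Qed.

Lemma addmapN (X Y : zmodType) (h : X -> Y) :
  is_addmap h -> forall u v, h (u - v) = h u - h v.
Proof.
move=> h_add u v; have hN : h (- v) = - h v.
  by apply/eqP; rewrite -subr_eq0 opprK -h_add addNr (addmap0 h_add).
by rewrite h_add hN.
Qed.

Section HomConnectionOnHom.

Variables (k : fieldType) (A B : algType k).
Variables (OA : zmodType) (lOA : A -> OA -> OA) (rOA : OA -> A -> OA) (dA : A -> OA).
Variables (OB : zmodType) (dB : B -> OB).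
Variables (E : zmodType) (lE : B -> E -> E) (rE : E -> A -> E).
Variables (T : zmodType) (tT : OB -> E -> T) (lT : B -> T -> T) (rT : T -> A -> T).
Variables (S : zmodType) (tS : E -> OA -> S) (nab0 : E -> T) (sigma : S -> T).
Variables (M : zmodType) (rM : M -> A -> M) (nabla0 : (OA -> M) -> M).

Hypothesis tS_addl : forall e1 e2 w, tS (e1 + e2) w = tS e1 w + tS e2 w.
Hypothesis tS_addr : forall e w1 w2, tS e (w1 + w2) = tS e w1 + tS e w2.
Hypothesis tS_balanced : forall e a w, tS (rE e a) w = tS e (lOA a w).

Hypothesis nab0_add : is_addmap nab0.
Hypothesis nab0_leibnizl : forall b e, nab0 (lE b e) = tT (dB b) e + lT b (nab0 e).
Hypothesis nab0_leibnizr :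
  forall e a, nab0 (rE e a) = rT (nab0 e) a + sigma (tS e (dA a)).

Hypothesis sigma_add : is_addmap sigma.
Hypothesis sigma_linearl : forall b e w, sigma (tS (lE b e) w) = lT b (sigma (tS e w)).
Hypothesis sigma_linearr : forall e w a, sigma (tS e (rOA w a)) = rT (sigma (tS e w)) a.

Hypothesis rM_add : forall a, is_addmap (fun m => rM m a).

Hypothesis nabla0_add : forall f g, homR rOA rM f -> homR rOA rM g ->
  nabla0 (fun w => f w + g w) = nabla0 f + nabla0 g.
Hypothesis nabla0_scale : forall (c : k) f, homR rOA rM f ->
  nabla0 (fun w => rM (f w) (c%:A)) = rM (nabla0 f) (c%:A).
Hypothesis nabla0_leibniz : forall f a, homR rOA rM f ->
  nabla0 (fun w => f (lOA a w)) = rM (nabla0 f) a + f (dA a).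

Local Notation NE := (nablaE nabla0 sigma tS nab0).

Lemma homR_sigma_pullback F e :
  homR rT rM F -> homR rOA rM (fun w => F (sigma (tS e w))).
Proof.
case=> F_add F_lin; split => [u v | w a]; first by rewrite tS_addr sigma_add F_add.
by rewrite sigma_linearr F_lin.
Qed.

Lemma nablaE_additive F : homR rT rM F -> is_addmap (NE F).
Proof.
move=> homF e1 e2; have [F_add _] := homF; rewrite /nablaE.
have -> : (fun w => F (sigma (tS (e1 + e2) w))) =
          (fun w => F (sigma (tS e1 w)) + F (sigma (tS e2 w))).
  by apply: functional_extensionality => w; rewrite tS_addl sigma_add F_add.
rewrite (nabla0_add (homR_sigma_pullback e1 homF) (homR_sigma_pullback e2 homF)).
by rewrite nab0_add F_add opprD addrACA.
Qed.

Lemma nablaE_linearr F e a : homR rT rM F -> NE F (rE e a) = rM (NE F e) a.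
Proof.
move=> homF; have [F_add F_lin] := homF; rewrite /nablaE.
have -> : (fun w => F (sigma (tS (rE e a) w))) =
          (fun w => F (sigma (tS e (lOA a w)))).
  by apply: functional_extensionality => w; rewrite tS_balanced.
rewrite (nabla0_leibniz a (homR_sigma_pullback e homF)).
rewrite nab0_leibnizr F_add F_lin (addmapN (rM_add a)).
by rewrite opprD addrACA subrr addr0.
Qed.

Lemma nablaE_homR F : homR rT rM F -> homR rE rM (NE F).
Proof.
by move=> homF; split; [exact: nablaE_additive | move=> e a; exact: nablaE_linearr].
Qed.

Lemma nablaE_add F G : homR rT rM F -> homR rT rM G ->
  forall e, NE (fun t => F t + G t) e = NE F e + NE G e.
Proof.
move=> homF homG e; rewrite /nablaE.
rewrite (nabla0_add (homR_sigma_pullback e homF) (homR_sigma_pullback e homG)).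
by rewrite opprD addrACA.
Qed.

Lemma nablaE_scale (c : k) F : homR rT rM F ->
  forall e, NE (fun t => rM (F t) (c%:A)) e = rM (NE F e) (c%:A).
Proof.
move=> homF e; rewrite /nablaE.
by rewrite (nabla0_scale c (homR_sigma_pullback e homF)) (addmapN (rM_add _)).
Qed.

Lemma nablaE_leibniz F b : homR rT rM F ->
  forall e, NE (fun t => F (lT b t)) e = NE F (lE b e) + F (tT (dB b) e).
Proof.
case=> F_add _ e; rewrite /nablaE.
have -> : (fun w => F (sigma (tS (lE b e) w))) =
          (fun w => F (lT b (sigma (tS e w)))).
  by apply: functional_extensionality => w; rewrite sigma_linearl.
by rewrite nab0_leibnizl F_add opprD addrA addrAC subrK.
Qed.

End HomConnectionOnHom.

Theorem mainTheorem2 (k : fieldType) (A B : algType k)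
  (OA : zmodType) (lOA : A -> OA -> OA) (rOA : OA -> A -> OA) (dA : A -> OA)
  (OB : zmodType) (lOB : B -> OB -> OB) (rOB : OB -> B -> OB) (dB : B -> OB)
  (E : zmodType) (lE : B -> E -> E) (rE : E -> A -> E)
  (T : zmodType) (tT : OB -> E -> T) (lT : B -> T -> T) (rT : T -> A -> T)
  (S : zmodType) (tS : E -> OA -> S)
  (nab0 : E -> T) (sigma : S -> T)
  (M : zmodType) (rM : M -> A -> M) (nabla0 : (OA -> M) -> M) :
  fodc lOA rOA dA -> fodc lOB rOB dB -> kbimod lE rE ->
  is_tensor rOB lE tT ->
  (forall b, is_addmap (lT b)) -> (forall b w e, lT b (tT w e) = tT (lOB b w) e) ->
  (forall a, is_addmap (fun t => rT t a)) -> (forall w e a, rT (tT w e) a = tT w (rE e a)) ->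
  is_tensor rE lOA tS ->
  is_addmap nab0 ->
  (forall (c : k) e, nab0 (lE (c%:A) e) = lT (c%:A) (nab0 e)) ->
  (forall b e, nab0 (lE b e) = tT (dB b) e + lT b (nab0 e)) ->
  is_addmap sigma ->
  (forall b e w, sigma (tS (lE b e) w) = lT b (sigma (tS e w))) ->
  (forall e w a, sigma (tS e (rOA w a)) = rT (sigma (tS e w)) a) ->
  (forall e a, nab0 (rE e a) = rT (nab0 e) a + sigma (tS e (dA a))) ->
  rmod_act rM ->
  is_hom_connection lOA rOA dA rM nabla0 ->
  let NE := nablaE nabla0 sigma tS nab0 in
  [/\ forall F, homR rT rM F -> homR rE rM (NE F),
      forall F G, homR rT rM F -> homR rT rM G ->
        forall e, NE (fun t => F t + G t) e = NE F e + NE G e,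
      forall (c : k) F, homR rT rM F ->
        forall e, NE (fun t => rM (F t) (c%:A)) e = rM (NE F e) (c%:A) &
      forall F b, homR rT rM F ->
        forall e, NE (fun t => F (lT b t)) e = NE F (lE b e) + F (tT (dB b) e)].
Proof.
move=> _ _ _ _ _ _ _ _ [tS_addl tS_addr tS_balanced _] nab0_add _ nab0_leibnizl
  sigma_add sigma_linearl sigma_linearr nab0_leibnizr [_ _ rM_addv _]
  [nabla0_add nabla0_scale nabla0_leibniz] NE.
have rM_add : forall a, is_addmap (fun m => rM m a) by move=> a u v; exact: rM_addv.
split.
- exact: nablaE_homR.
- exact: nablaE_add.
- exact: nablaE_scale.
- exact: nablaE_leibniz.
Qed.
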